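(* Let $X$ be a separable Banach space, $\mu_{\mathrm{prior}}$ a Borel probability measure on $X$, $\mathcal L^\dagger,\mathcal L^\Delta:X\to\mathbb R^d$ measurable with $\|\mathcal L^\dagger\|_{L^2(\mu_{\mathrm{prior}})},\|\mathcal L^\Delta\|_{L^2(\mu_{\mathrm{prior}})}<\infty$, $y\in\mathbb R^d$, and the noise density $\rho$ satisfy (N.1)–(N.3). Let $\mu^y(d\bar u)\propto\rho(y-\mathcal L^\dagger(\bar u))\mu_{\mathrm{prior}}(d\bar u)$ and $\mu^{\Delta,y}(d\bar u)\propto\rho(y-\mathcal L^\Delta(\bar u))\mu_{\mathrm{prior}}(d\bar u)$ (normalized probability measures). There is $C>0$ depending only on $\rho$ such that for every $p\in[1,\infty]$, $$\Big\|\frac{d\mu^{\Delta,y}}{d\mu_{\mathrm{prior}}}-\frac{d\mu^y}{d\mu_{\mathrm{prior}}}\Big\|_{L^p(\mu_{\mathrm{prior}})}\le C\|\mathcal L^\Delta-\mathcal L^\dagger\|_{L^p(\mu_{\mathrm{prior}})}\exp\big(2|y|_\Gamma^2+\|\mathcal L^\Delta\|_{L^2(\mu_{\mathrm{prior}})}^2+\|\mathcal L^\dagger\|_{L^2(\mu_{\mathrm{prior}})}^2\big).$$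
   Context: $|y|_\Gamma=\langle y,\Gamma^{-1}y\rangle^{1/2}$ for fixed symmetric positive definite $\Gamma$; for $F:X\to\mathbb R^d$, $\|F\|_{L^p(\mu_{\mathrm{prior}})}=(\int|F|_\Gamma^pd\mu_{\mathrm{prior}})^{1/p}$ ($\mu_{\mathrm{prior}}$-essential supremum for $p=\infty$); for scalar functions the absolute value replaces $|\cdot|_\Gamma$. Noise density $\rho>0$: (N.1) $\rho$ Lipschitz w.r.t. $|\cdot|_\Gamma$; (N.2) $\sup\rho<\infty$; (N.3) $\rho(y)\ge C^{-1}e^{-|y|_\Gamma^2/2}$. *)

From HB Require Import structures.
From mathcomp Require Import all_boot all_order all_algebra.
From mathcomp Require Import all_classical all_reals all_analysis.
Set Implicit Arguments. Unset Strict Implicit. Unset Printing Implicit Defensive.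
Import Order.TTheory GRing.Theory Num.Theory.
Import numFieldNormedType.Exports.
Local Open Scope classical_set_scope.
Local Open Scope ring_scope.

Notation borel X := (g_sigma_algebraType (@open X)).

Definition separable_space (X : topologicalType) : Prop :=
  exists D : set X, countable D /\ closure D = [set: X].

Definition spd_matrix (R : realType) (d : nat) (G : 'M[R]_d) : Prop :=
  G^T = G /\ forall v : 'rV[R]_d, v != 0 -> 0 < (v *m G *m v^T) 0 0.

Definition Gnorm (R : realType) (d : nat) (G : 'M[R]_d) (y : 'rV[R]_d) : R :=
  Num.sqrt ((y *m invmx G *m y^T) 0 0).

(* Noise assumptions (N.1)-(N.3), together with strict positivity rho > 0. *)
Definition noise_assumptions (R : realType) (d : nat) (G : 'M[R]_d)
    (rho : 'rV[R]_d -> R) : Prop :=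
  [/\ (forall y, 0 < rho y),
      (* (N.1) Lipschitz w.r.t. |.|_Gamma *)
      (exists L : R, forall a b, `|rho a - rho b| <= L * Gnorm G (a - b)),
      (* (N.2) bounded *)
      (exists M : R, forall y, rho y <= M) &
      (* (N.3) Gaussian lower bound *)
      (exists C : R, 0 < C /\ forall y, C^-1 * expR (- (Gnorm G y ^+ 2) / 2) <= rho y)].

(* Coordinatewise (equivalently Borel) measurability of F : X -> R^d. *)
Definition rv_measurable (dX : measure_display) (T : measurableType dX)
    (R : realType) (d : nat) (F : T -> 'rV[R]_d) : Prop :=
  forall i : 'I_d, measurable_fun [set: T] (fun x => F x 0 i).

Definition LpG (dX : measure_display) (T : measurableType dX) (R : realType)
    (d : nat) (G : 'M[R]_d) (mu : {measure set T -> \bar R}) (p : \bar R)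
    (F : T -> 'rV[R]_d) : \bar R :=
  Lnorm mu p (fun x => (Gnorm G (F x))%:E).

Definition post_density (dX : measure_display) (T : measurableType dX)
    (R : realType) (d : nat) (mu : {measure set T -> \bar R})
    (rho : 'rV[R]_d -> R) (L : T -> 'rV[R]_d) (y : 'rV[R]_d) : T -> R :=
  fun u => rho (y - L u) / fine (\int[mu]_x (rho (y - L x))%:E)%E.

From HB Require Import structures.
From mathcomp Require Import all_boot all_order all_algebra.
From mathcomp Require Import all_classical all_reals all_analysis.
From mathcomp Require Import ess_sup_inf measurable_realfun.
From mathcomp Require Import ring lra.
Set Implicit Arguments. Unset Strict Implicit. Unset Printing Implicit Defensive.
Import Order.TTheory GRing.Theory Num.Theory.
Import numFieldNormedType.Exports.
Local Open Scope classical_set_scope.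
Local Open Scope ring_scope.

(* With Z_L := \int rho(y - L) dmu the densities are rho(y - L)/Z_L, and
     rho(y - L_Delta)/Z_Delta - rho(y - L_dag)/Z_dag
       = (rho(y - L_Delta) - rho(y - L_dag))/Z_Delta
         + rho(y - L_dag) (Z_dag - Z_Delta)/(Z_Delta Z_dag).
   By the Lipschitz bound (N.1) the first numerator is at most
   K |L_Delta - L_dag|_Gamma pointwise and the second at most
   K ||L_Delta - L_dag||_L1 <= K ||L_Delta - L_dag||_Lp, while (N.2) bounds
   rho.  The normalising constants are bounded below using (N.3),
   |y - L|^2 <= 2|y|^2 + 2|L|^2 and Jensen's inequality for exp:
   Z_L >= C^-1 exp(-|y|^2 - ||L||_2^2).  Minkowski's inequality concludes. *)

Section quadratic_form.
Variables (R : comRingType) (d : nat).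
Implicit Types (M : 'M[R]_d) (v a b : 'rV[R]_d).

Definition qform M v : R := (v *m M *m v^T) 0 0.

Lemma qformE M v : qform M v = \sum_j (\sum_k v 0 k * M k j) * v 0 j.
Proof. by rewrite /qform !mxE; apply: eq_bigr => j _; rewrite !mxE. Qed.

Lemma qformN M v : qform M (- v) = qform M v.
Proof.
rewrite !qformE; apply: eq_bigr => j _.
rewrite !mulr_suml; apply: eq_bigr => k _.
rewrite !mxE; ring.
Qed.

Lemma qform_parallelogram M a b :
  qform M (a - b) + qform M (a + b) = 2 * qform M a + 2 * qform M b.
Proof.
rewrite !qformE !mulr_sumr -!big_split /=; apply: eq_bigr => j _.
rewrite !mulr_suml !mulr_sumr -!big_split /=; apply: eq_bigr => k _.
rewrite !mxE; ring.
Qed.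

End quadratic_form.

Lemma qform_le_coord (R : realDomainType) d (M : 'M[R]_d) (v : 'rV[R]_d) e :
  (forall k, `|v 0 k| <= e) -> qform M v <= (\sum_j \sum_k `|M k j|) * e ^+ 2.
Proof.
move=> ve; rewrite qformE mulr_suml; apply: ler_sum => j _.
rewrite !mulr_suml; apply: ler_sum => k _.
have e0 : 0 <= e by apply: le_trans (ve k).
apply: le_trans (ler_norm _) _.
rewrite !normrM expr2 mulrA [`|v 0 k| * _]mulrC.
by apply: ler_pM; rewrite ?mulr_ge0 ?ler_pM.
Qed.

Section Gamma_norm.
Variables (R : realType) (d : nat) (G : 'M[R]_d).
Implicit Types (v a b : 'rV[R]_d).

Lemma Gnorm_ge0 v : 0 <= Gnorm G v.
Proof. exact: sqrtr_ge0. Qed.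

Lemma GnormN v : Gnorm G (- v) = Gnorm G v.
Proof. by rewrite /Gnorm -/(qform _ _) qformN. Qed.

Lemma GnormB a b : Gnorm G (a - b) = Gnorm G (b - a).
Proof. by rewrite -GnormN opprB. Qed.

Lemma GnormBB c a b : Gnorm G ((c - a) - (c - b)) = Gnorm G (a - b).
Proof. by rewrite opprB addrC addrA subrK GnormB. Qed.

Lemma Gnorm_le_coord v e : 0 <= e -> (forall k, `|v 0 k| <= e) ->
  Gnorm G v <= Num.sqrt (\sum_j \sum_k `|invmx G k j|) * e.
Proof.
move=> e0 ve; rewrite /Gnorm -/(qform _ _) -(ger0_norm e0) -sqrtr_sqr.
rewrite -sqrtrM; last by apply: sumr_ge0 => j _; apply: sumr_ge0.
by apply: ler_wsqrtr; exact: qform_le_coord.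
Qed.

Hypothesis spdG : spd_matrix G.

Lemma spd_unitmx : G \in unitmx.
Proof.
case: spdG => _ pos; rewrite unitmxE unitfE; apply/negP => /det0P[v v0 vG].
by have := pos v v0; rewrite vG mul0mx mxE ltxx.
Qed.

Lemma qform_invmx_ge0 v : 0 <= qform (invmx G) v.
Proof.
case: (spdG) => sym pos; set w := v *m invmx G.
have vE : v = w *m G by rewrite /w -mulmxA mulVmx ?spd_unitmx // mulmx1.
have -> : qform (invmx G) v = (w *m G *m w^T) 0 0.
  by rewrite /qform -/w {1}vE trmx_mul sym mulmxA.
have [->|w0] := eqVneq w 0; first by rewrite !mul0mx mxE.
exact/ltW/pos.
Qed.

Lemma sqr_Gnorm v : Gnorm G v ^+ 2 = qform (invmx G) v.
Proof. by rewrite /Gnorm sqr_sqrtr // qform_invmx_ge0. Qed.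

Lemma sqr_GnormB_le a b :
  Gnorm G (a - b) ^+ 2 <= 2 * Gnorm G a ^+ 2 + 2 * Gnorm G b ^+ 2.
Proof.
by rewrite !sqr_Gnorm -qform_parallelogram lerDl qform_invmx_ge0.
Qed.

End Gamma_norm.

Section rv_measurable.
Context dT (T : measurableType dT) (R : realType) (d : nat).
Implicit Types F : T -> 'rV[R]_d.

Lemma rv_measurable_cst (c : 'rV[R]_d) : rv_measurable (fun _ : T => c).
Proof. by move=> i; exact: measurable_cst. Qed.

Lemma rv_measurableB F1 F2 : rv_measurable F1 -> rv_measurable F2 ->
  rv_measurable (fun x => F1 x - F2 x).
Proof.
move=> mF1 mF2 i; rewrite (_ : (fun x => _) = fun x => F1 x 0 i - F2 x 0 i).
  exact: measurable_funB.
by apply: funext => x; rewrite !mxE.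
Qed.

Lemma measurable_qform (M : 'M[R]_d) F :
  rv_measurable F -> measurable_fun setT (fun x => qform M (F x)).
Proof.
move=> mF; under eq_fun do rewrite qformE.
apply: measurable_sum => j; apply: measurable_funM; last exact: mF.
apply: measurable_sum => k; apply: measurable_funM; first exact: mF.
exact: measurable_cst.
Qed.

Lemma measurable_Gnorm (G : 'M[R]_d) F :
  rv_measurable F -> measurable_fun setT (fun x => Gnorm G (F x)).
Proof.
move=> mF; apply: (measurableT_comp (continuous_measurable_fun _)).
  exact: sqrt_continuous.
exact: measurable_qform.
Qed.

End rv_measurable.

Definition rat_row {R : realType} {d : nat} (n : nat) : 'rV[R]_d :=
  if @pickle_inv 'rV[rat]_d n is Some r then map_mx ratr r else 0.

Lemma rat_row_dense (R : realType) d (v : 'rV[R]_d) e : 0 < e ->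
  exists n, forall k, `|(v - rat_row n) 0 k| <= e.
Proof.
move=> e0; have /fin_all_exists[q qv] : forall k : 'I_d,
    exists q : rat, ratr q \in `](v 0 k - e), (v 0 k + e)[.
  by move=> k; apply: rat_in_itvoo; lra.
exists (pickle (\row_k q k)) => k; rewrite /rat_row pickleK_inv !mxE.
have := qv k; rewrite in_itv /= => /andP[qlo qhi].
by rewrite ler_norml; apply/andP; split; lra.
Qed.

Lemma rat_row_Gnorm_dense (R : realType) d (G : 'M[R]_d) v e : 0 < e ->
  exists n, Gnorm G (v - rat_row n) <= e.
Proof.
move=> e0; pose c := Num.sqrt (\sum_j \sum_k `|invmx G k j|).
have c0 : 0 <= c := sqrtr_ge0 _.
have c1 : 0 < c + 1 by lra.
have [n vn] := rat_row_dense v (divr_gt0 e0 c1).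
exists n; apply: le_trans (Gnorm_le_coord _ _ vn) _; first exact/ltW/divr_gt0.
by rewrite -/c mulrA ler_pdivrMr //; lra.
Qed.

Section lipschitz_measurable.
Variables (R : realType) (d : nat) (G : 'M[R]_d) (phi : 'rV[R]_d -> R) (K : R).
Hypotheses (K0 : 0 <= K)
  (phiK : forall a b, `|phi a - phi b| <= K * Gnorm G (a - b)).

Let envelope v n := phi (rat_row n) + K * Gnorm G (v - rat_row n).

Lemma lipschitz_le_envelope v n : phi v <= envelope v n.
Proof.
rewrite /envelope; have := phiK v (rat_row n).
by have := ler_norm (phi v - phi (rat_row n)); lra.
Qed.

(* Row vectors carry no measurable structure here, only their coordinates
   do; writing [phi] as a countable infimum is what makes [phi \o F]
   measurable. *)
Lemma lipschitz_infsE v : phi v = infs (envelope v) 0.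
Proof.
rewrite /infs /=; set E := sdrop _ _.
have E_lb : lbound E (phi v) by move=> _ [n _ <-]; exact: lipschitz_le_envelope.
apply/le_anti/andP; split; first by apply: lb_le_inf => //; exists (envelope v 0), 0%N.
apply/ler_addgt0Pr => e e0.
have cK : 0 < 2 * K + 1 by have := K0; lra.
set x := e / (2 * K + 1).
have ex : (2 * K + 1) * x = e by rewrite /x mulrC divfK ?gt_eqF.
have x0 : 0 <= x by rewrite /x ltW ?divr_gt0.
have [n vn] := rat_row_Gnorm_dense G v (divr_gt0 e0 cK).
have infE : inf E <= envelope v n by apply: ge_inf; [exists (phi v)|exists n].
have Kvn : K * Gnorm G (v - rat_row n) <= K * x by rewrite ler_wpM2l.
have := phiK (rat_row n) v; rewrite GnormB.
have := ler_norm (phi (rat_row n) - phi v).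
by move: infE; rewrite /envelope; lra.
Qed.

Lemma measurable_lipschitz_comp dT (T : measurableType dT) (F : T -> 'rV[R]_d) :
  rv_measurable F -> measurable_fun setT (fun x => phi (F x)).
Proof.
move=> mF.
apply: (eq_measurable_fun (fun x => infs (envelope (F x)) 0)).
  by move=> x _; rewrite -lipschitz_infsE.
apply: measurable_fun_infs => [x _|n].
  by exists (phi (F x)) => _ [n _ <-]; exact: lipschitz_le_envelope.
apply: measurable_funD; first exact: measurable_cst.
apply: measurable_funM; first exact: measurable_cst.
by apply: measurable_Gnorm; apply: rv_measurableB => //; exact: rv_measurable_cst.
Qed.

End lipschitz_measurable.

Local Open Scope ereal_scope.

Lemma measurable_powR_norm dT (T : measurableType dT) (R : realType) (r : R)
    (f : T -> R) :
  measurable_fun setT f -> measurable_fun setT (fun x => ((`|f x| `^ r)%R%:E)).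
Proof.
move=> mf; apply/measurable_EFinP.
apply: (measurableT_comp (measurable_powR r)).
exact: (measurableT_comp (@normr_measurable R setT)).
Qed.

Section Lnorm_measure.
Context dT (T : measurableType dT) (R : realType).
Variable mu : {measure set T -> \bar R}.
Implicit Types (p : \bar R) (f g : T -> R).

Lemma Lnorm_EFin (r : R) f :
  Lnorm mu r%:E (fun x => (f x)%:E) = (\int[mu]_x ((`|f x| `^ r)%R%:E)) `^ r^-1.
Proof. by rewrite unlock. Qed.

Lemma Lnorm_le p f g : 0 <= p ->
  measurable_fun setT f -> measurable_fun setT g ->
  (forall x, (`|f x| <= `|g x|)%R) ->
  Lnorm mu p (fun x => (f x)%:E) <= Lnorm mu p (fun x => (g x)%:E).
Proof.
case: p => [r||//] p0 mf mg fg; last first.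
  rewrite unlock /=; case: ifPn => // _; apply: le_ess_sup.
  by apply: nearW => x /=; rewrite lee_fin.
have r0 : (0 <= r)%R by rewrite -lee_fin.
have int_ge0 (h : T -> R) : 0 <= \int[mu]_x ((`|h x| `^ r)%R%:E).
  by apply: integral_ge0 => x _; rewrite lee_fin powR_ge0.
rewrite !Lnorm_EFin; apply: gt0_ler_poweR; rewrite ?invr_ge0 ?in_itv /= ?leey ?andbT //.
apply: ge0_le_integral => //; try exact: measurable_powR_norm.
by move=> x _; rewrite lee_fin ge0_ler_powR.
Qed.

Lemma Lnorm_scale p (c : R) f : 1 <= p -> (0 <= c)%R -> measurable_fun setT f ->
  Lnorm mu p (fun x => (c * f x)%R%:E) = c%:E * Lnorm mu p (fun x => (f x)%:E).
Proof.
case: p => [r||//] p1 c0 mf; last first.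
  rewrite unlock /=; case: ifPn => mu0; last by rewrite mule0.
  rewrite -ess_supZl //; apply: eq_ess_sup; apply: nearW => x /=.
  by rewrite normrM (ger0_norm c0) EFinM.
have r0 : (0 < r)%R by rewrite (lt_le_trans ltr01) // -lee_fin.
rewrite !Lnorm_EFin.
under eq_integral do rewrite normrM (ger0_norm c0) powRM // EFinM.
rewrite ge0_integralZl ?lee_fin ?powR_ge0 //; last exact: measurable_powR_norm.
rewrite poweRM ?lee_fin ?powR_ge0 //; last first.
  by apply: integral_ge0 => x _; rewrite lee_fin powR_ge0.
by rewrite poweR_EFin -powRrM mulfV ?gt_eqF // powRr1.
Qed.

End Lnorm_measure.

Section Lnorm_probability.
Context dT (T : measurableType dT) (R : realType).
Variable mu : probability T R.
Implicit Types (p : \bar R) (f g : T -> R).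

Lemma probability_setT_gt0 : 0 < mu [set: T].
Proof. by rewrite probability_setT lte01. Qed.

Lemma integral_cst_probability (c : \bar R) : \int[mu]_x c = c.
Proof.
by rewrite integral_cst // [X in _ * X](_ : _ = 1) ?mule1 //; exact: probability_setT.
Qed.

Lemma Lnorm_cst p (c : R) : 1 <= p -> (0 <= c)%R ->
  Lnorm mu p (fun _ => c%:E) = c%:E.
Proof.
case: p => [r||//] p1 c0; last first.
  rewrite unlock /= probability_setT_gt0 (_ : _ \o _ = cst c%:E).
    exact/ess_sup_cst/probability_setT_gt0.
  by apply: funext => x /=; rewrite ger0_norm.
have r0 : (0 < r)%R by rewrite (lt_le_trans ltr01) // -lee_fin.
rewrite Lnorm_EFin integral_cst_probability poweR_EFin.
by rewrite ger0_norm // -powRrM mulfV ?gt_eqF // powRr1.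
Qed.

Lemma integral_le_Lnorm p f : 1 <= p -> measurable_fun setT f ->
  (forall x, (0 <= f x)%R) ->
  \int[mu]_x (f x)%:E <= Lnorm mu p (fun x => (f x)%:E).
Proof.
move=> p1 mf f0; case: p p1 => [r||//] p1; last first.
  rewrite unlock /= probability_setT_gt0 -[X in _ <= X]integral_cst_probability.
  set g := abse \o _.
  have s0 : 0 <= ess_sup mu g.
    by apply: ess_sup_gee; [exact: probability_setT_gt0 | apply: nearW => x; exact: abse_ge0].
  apply: ae_ge0_le_integral => //.
  - by move=> x _; rewrite lee_fin.
  - exact/measurable_EFinP.
  apply: filterS (ess_sup_ge mu g) => x /= fx _.
  by rewrite (le_trans _ fx) // lee_fin ler_norm.
have L1E : Lnorm mu 1 (fun x => (f x)%:E) = \int[mu]_x (f x)%:E.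
  by rewrite Lnorm1; apply: eq_integral => x _; rewrite abse_EFin ger0_norm.
rewrite -L1E.
have [->|r1] := eqVneq r 1%R; first exact: lexx.
have r1s : (1 < r)%R by rewrite lt_neqAle eq_sym r1 -lee_fin.
pose q := (r / (r - 1))%R.
have q0 : (0 < q)%R by rewrite divr_gt0 ?subr_gt0 // (lt_trans ltr01).
have q1 : (1 <= q)%R by rewrite /q ler_pdivlMr ?subr_gt0 //; lra.
have rq : (r^-1 + q^-1 = 1)%R.
  by rewrite /q invf_div; field; rewrite gt_eqF // (lt_trans ltr01).
have := hoelder mu mf (@measurable_cst _ _ T R setT 1%R) (lt_trans ltr01 r1s) q0 rq.
rewrite (_ : Lnorm mu q%:E _ = 1); last by apply: Lnorm_cst; rewrite ?lee_fin.
rewrite mule1; apply: le_trans; rewrite !Lnorm1 le_eqVlt; apply/orP; left.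
by apply/eqP/eq_integral => x _ /=; rewrite mulr1.
Qed.

Lemma Lnorm_affine_le p (a b : R) f : 1 <= p -> (0 <= a)%R -> (0 <= b)%R ->
  measurable_fun setT f ->
  Lnorm mu p (fun x => (a * f x + b)%R%:E) <=
    a%:E * Lnorm mu p (fun x => (f x)%:E) + b%:E.
Proof.
move=> p1 a0 b0 mf.
have maf : measurable_fun setT (fun x => a * f x)%R.
  by apply: measurable_funM => //; exact: measurable_cst.
have := eminkowski mu maf (@measurable_cst _ _ T R setT b) p1.
by rewrite Lnorm_scale // Lnorm_cst.
Qed.

Lemma integrable_bounded f (M : R) :
  measurable_fun setT f -> (forall x, (`|f x| <= M)%R) ->
  mu.-integrable setT (EFin \o f).
Proof.
move=> mf fM; apply/integrableP; split; first exact/measurable_EFinP.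
apply: (@le_lt_trans _ _ (\int[mu]_x (cst M%:E x))).
  apply: ge0_le_integral => //.
    by apply/measurableT_comp => //; exact/measurable_EFinP.
  by move=> x _ /=; rewrite lee_fin.
by rewrite integral_cst_probability ltry.
Qed.

End Lnorm_probability.

Local Close Scope ereal_scope.

Definition normalizer dT (T : measurableType dT) (R : realType) d
    (mu : {measure set T -> \bar R}) (rho : 'rV[R]_d -> R) (L : T -> 'rV[R]_d)
    (y : 'rV[R]_d) : R :=
  fine (\int[mu]_x (rho (y - L x))%:E)%E.

Lemma ratio_diff_le (R : realFieldType) (a b za zb : R) :
  0 < za -> 0 < zb -> 0 <= b ->
  `|a / za - b / zb| <= `|a - b| * za^-1 + b * `|zb - za| * (za^-1 * zb^-1).
Proof.
move=> za0 zb0 b0.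
have -> : a / za - b / zb = (a - b) * za^-1 + b * (zb - za) * (za^-1 * zb^-1).
  by field; rewrite !gt_eqF.
apply: le_trans (ler_normD _ _) _.
by rewrite !normrM (ger0_norm b0) !normfV (gtr0_norm za0) (gtr0_norm zb0).
Qed.

Lemma inv_le_of_expR_lower (R : realType) (C0 a z : R) :
  0 < C0 -> C0^-1 * expR (- a) <= z -> 0 < z /\ z^-1 <= C0 * expR a.
Proof.
move=> C00 hz.
have lb0 : 0 < C0^-1 * expR (- a) by rewrite mulr_gt0 ?invr_gt0 ?expR_gt0.
have z0 : 0 < z := lt_le_trans lb0 hz.
split => //; have -> : C0 * expR a = (C0^-1 * expR (- a))^-1.
  by rewrite invfM invrK expRN invrK.
by rewrite lef_pV2 ?posrE.
Qed.

Section posterior.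
Variables (R : realType) (d : nat) (G : 'M[R]_d) (rho : 'rV[R]_d -> R).
Variables (K M C0 : R).
Hypotheses (spdG : spd_matrix G) (rho_gt0 : forall v, 0 < rho v)
  (K0 : 0 <= K) (rho_lip : forall a b, `|rho a - rho b| <= K * Gnorm G (a - b))
  (rho_le : forall v, rho v <= M) (C0_gt0 : 0 < C0)
  (rho_ge : forall v, C0^-1 * expR (- (Gnorm G v ^+ 2) / 2) <= rho v).

Let C0_ge0 : 0 <= C0 := ltW C0_gt0.
Let M_ge0 : 0 <= M := le_trans (ltW (rho_gt0 0)) (rho_le 0).

(* The tangent of exp at -(|y|^2 + I), combined with (N.3); integrating it
   against mu with I := ||L||_2^2 is Jensen's inequality. *)
Lemma rho_ge_tangent (y v : 'rV[R]_d) (I : R) :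
  C0^-1 * expR (- (Gnorm G y ^+ 2 + I)) * (1 + I - Gnorm G v ^+ 2) <= rho (y - v).
Proof.
set m := - (Gnorm G y ^+ 2 + I); set t := - (Gnorm G y ^+ 2 + Gnorm G v ^+ 2).
have tangent : expR m * (1 + (t - m)) <= expR t.
  have -> : expR t = expR (t - m) * expR m by rewrite -expRD subrK.
  by rewrite mulrC ler_wpM2r ?expR_ge0 // expR_ge1Dx.
have t_le : t <= - (Gnorm G (y - v) ^+ 2) / 2.
  by have := sqr_GnormB_le spdG y v; rewrite /t; lra.
apply: le_trans (rho_ge (y - v)); rewrite -mulrA ler_wpM2l ?invr_ge0 //.
have -> : 1 + I - Gnorm G v ^+ 2 = 1 + (t - m) by rewrite /t /m; ring.
by apply: le_trans tangent _; rewrite ler_expR.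
Qed.

Context dT (T : measurableType dT) (mu : probability T R).
Implicit Types L : T -> 'rV[R]_d.

Lemma measurable_rho_comp L y : rv_measurable L ->
  measurable_fun setT (fun x => rho (y - L x)).
Proof.
move=> mL; have rho_y_lip a b : `|rho (y - a) - rho (y - b)| <= K * Gnorm G (a - b).
  by rewrite -(GnormBB _ y); exact: rho_lip.
exact: (measurable_lipschitz_comp K0 rho_y_lip mL).
Qed.

Lemma integrable_rho_comp L y : rv_measurable L ->
  mu.-integrable setT (EFin \o fun x => rho (y - L x)).
Proof.
move=> mL; apply: (integrable_bounded _ (M := M)); first exact: measurable_rho_comp.
by move=> x; rewrite ger0_norm ?rho_le // ltW.
Qed.

Lemma LpG2E L :
  LpG G mu 2%:E L = ((\int[mu]_x (Gnorm G (L x) ^+ 2)%:E) `^ 2^-1)%E.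
Proof.
rewrite /LpG Lnorm_EFin; congr (_ `^ _)%E; apply: eq_integral => x _.
by rewrite ger0_norm ?Gnorm_ge0 // powR_mulrn ?Gnorm_ge0.
Qed.

Lemma integrable_sqr_Gnorm L : rv_measurable L -> (LpG G mu 2%:E L < +oo)%E ->
  mu.-integrable setT (EFin \o fun x => Gnorm G (L x) ^+ 2).
Proof.
move=> mL L2; apply/integrableP; split.
  by apply/measurable_EFinP/measurable_funX/measurable_Gnorm.
rewrite (_ : (\int[mu]_x _)%E = \int[mu]_x (Gnorm G (L x) ^+ 2)%:E)%E; last first.
  by apply: eq_integral => x _; rewrite /comp abse_EFin ger0_norm ?sqr_ge0.
by apply: (@lty_poweRy _ _ 2^-1); rewrite ?invr_neq0 // -LpG2E.
Qed.

Lemma sqr_fine_LpG2 L : (LpG G mu 2%:E L < +oo)%E ->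
  fine (LpG G mu 2%:E L) ^+ 2 = fine (\int[mu]_x (Gnorm G (L x) ^+ 2)%:E)%E.
Proof.
move=> L2; set I := (\int[mu]_x _)%E.
have I0 : (0 <= I)%E by apply: integral_ge0 => x _; rewrite lee_fin sqr_ge0.
have Ifin : I \is a fin_num.
  by rewrite ge0_fin_numE // (@lty_poweRy _ _ 2^-1) ?invr_neq0 // -LpG2E.
rewrite LpG2E -/I -(fineK Ifin) poweR_EFin /= powR12_sqrt ?fine_ge0 //.
by rewrite sqr_sqrtr // fine_ge0.
Qed.

Lemma normalizer_lower_bound L y : rv_measurable L ->
  (LpG G mu 2%:E L < +oo)%E ->
  C0^-1 * expR (- (Gnorm G y ^+ 2 + fine (LpG G mu 2%:E L) ^+ 2))
    <= normalizer mu rho L y.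
Proof.
move=> mL L2; rewrite sqr_fine_LpG2 //.
pose g x := Gnorm G (L x) ^+ 2.
set I := fine _; set c := C0^-1 * expR _.
have ig : mu.-integrable setT (EFin \o g) := integrable_sqr_Gnorm mL L2.
have Ifin := integrable_fin_num measurableT ig.
have icg : mu.-integrable setT (EFin \o fun x => c * g x).
  rewrite (_ : EFin \o _ = fun x => c%:E * (EFin \o g) x)%E.
    exact: integrableZl.
  by apply: funext => x; rewrite /= EFinM.
have ic : mu.-integrable setT (EFin \o cst (c * (1 + I))).
  exact: finite_measure_integrable_cst.
have int_tangent : (\int[mu]_x ((c * (1 + I))%:E - (c * g x)%:E))%E = c%:E.
  rewrite integralB_EFin // integral_cst_probability.
  under eq_integral do rewrite EFinM.
  by rewrite integralZl // -(fineK Ifin) -EFinM -EFinB; congr EFin; rewrite /I; ring.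
rewrite /normalizer -lee_fin fineK ?(integrable_fin_num _ (integrable_rho_comp _ mL)) //.
rewrite -int_tangent; apply: le_integral => //; first exact: integrableB.
  exact: integrable_rho_comp.
move=> x _; rewrite -EFinB lee_fin -mulrBr.
exact: rho_ge_tangent.
Qed.

Lemma normalizer_dist_le L1 L2 y : rv_measurable L1 -> rv_measurable L2 ->
  (`|normalizer mu rho L1 y - normalizer mu rho L2 y|%:E
    <= K%:E * \int[mu]_x (Gnorm G (L1 x - L2 x))%:E)%E.
Proof.
move=> mL1 mL2.
have m1 := measurable_rho_comp y mL1; have m2 := measurable_rho_comp y mL2.
have i1 := integrable_rho_comp y mL1; have i2 := integrable_rho_comp y mL2.
have mdist : measurable_fun setT (fun x => Gnorm G (L1 x - L2 x)).
  exact/measurable_Gnorm/rv_measurableB.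
rewrite /normalizer -abse_EFin EFinB !fineK ?(integrable_fin_num measurableT) //.
rewrite -integralB_EFin //; apply: le_trans (le_abse_integral _ _ _) _ => //.
  exact/measurable_EFinP/measurable_funB.
rewrite -ge0_integralZl //; last 2 first.
- exact/measurable_EFinP.
- by move=> x _; rewrite lee_fin Gnorm_ge0.
apply: ge0_le_integral => //.
- by apply: measurableT_comp => //; apply/measurable_EFinP/measurable_funB.
- by apply/measurable_EFinP/measurable_funM => //; exact: measurable_cst.
move=> x _; rewrite -EFinB abse_EFin lee_fin.
by rewrite -(GnormBB _ y); exact: rho_lip.
Qed.

Lemma normalizer_inv_le L y : rv_measurable L -> (LpG G mu 2%:E L < +oo)%E ->
  0 < normalizer mu rho L y /\
  (normalizer mu rho L y)^-1
    <= C0 * expR (Gnorm G y ^+ 2 + fine (LpG G mu 2%:E L) ^+ 2).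
Proof.
by move=> mL L2; apply: inv_le_of_expR_lower => //; exact: normalizer_lower_bound.
Qed.

Variables (LD Lt : T -> 'rV[R]_d) (y : 'rV[R]_d).
Hypotheses (mLD : rv_measurable LD) (mLt : rv_measurable Lt)
  (LD2 : (LpG G mu 2%:E LD < +oo)%E) (Lt2 : (LpG G mu 2%:E Lt < +oo)%E).

Let dist u := Gnorm G (LD u - Lt u).
Let dist_ge0 u : 0 <= dist u := Gnorm_ge0 G _.
Let measurable_dist : measurable_fun setT dist :=
  measurable_Gnorm G (rv_measurableB mLD mLt).
Let W := 2 * Gnorm G y ^+ 2 + fine (LpG G mu 2%:E LD) ^+ 2
  + fine (LpG G mu 2%:E Lt) ^+ 2.

Lemma post_density_diff_le (E : R) u :
  `|normalizer mu rho Lt y - normalizer mu rho LD y| <= K * E ->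
  `|post_density mu rho LD y u - post_density mu rho Lt y u|
    <= K * C0 * expR W * dist u + K * M * C0 ^+ 2 * expR W * E.
Proof.
move=> dZ.
have [zD0 izD] := normalizer_inv_le y mLD LD2.
have [zt0 izt] := normalizer_inv_le y mLt Lt2.
have yN := sqr_ge0 (Gnorm G y); have NDN := sqr_ge0 (fine (LpG G mu 2%:E LD)).
have NtN := sqr_ge0 (fine (LpG G mu 2%:E Lt)).
have izD' : (normalizer mu rho LD y)^-1 <= C0 * expR W.
  by apply: le_trans izD _; rewrite ler_wpM2l // ler_expR /W; lra.
have izDt : (normalizer mu rho LD y)^-1 * (normalizer mu rho Lt y)^-1
    <= C0 ^+ 2 * expR W.
  rewrite (_ : W = (Gnorm G y ^+ 2 + fine (LpG G mu 2%:E LD) ^+ 2)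
                 + (Gnorm G y ^+ 2 + fine (LpG G mu 2%:E Lt) ^+ 2)); last first.
    by rewrite /W; ring.
  by rewrite expRD expr2 mulrACA; apply: ler_pM => //; rewrite invr_ge0 ltW.
have rho_ge0 := ltW (rho_gt0 (y - Lt u)).
apply: le_trans (ratio_diff_le _ zD0 zt0 rho_ge0) _.
have dr : `|rho (y - LD u) - rho (y - Lt u)| <= K * dist u.
  by rewrite /dist -(GnormBB _ y); exact: rho_lip.
apply: lerD.
  rewrite (_ : _ * dist u = (K * dist u) * (C0 * expR W)); last by ring.
  by apply: ler_pM => //; rewrite invr_ge0 ltW.
rewrite (_ : _ * E = (M * (K * E)) * (C0 ^+ 2 * expR W)); last by ring.
apply: ler_pM; rewrite ?mulr_ge0 ?invr_ge0 ?(ltW zD0) ?(ltW zt0) //.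
exact: ler_pM.
Qed.

Lemma measurable_post_density L : rv_measurable L ->
  measurable_fun setT (post_density mu rho L y).
Proof.
move=> mL; apply: measurable_funM; first exact: measurable_rho_comp.
exact: measurable_cst.
Qed.

Lemma Lnorm_post_density_diff_le_dist (p : \bar R) : (1 <= p)%E ->
  (\int[mu]_x (dist x)%:E)%E \is a fin_num ->
  (Lnorm mu p (fun u => (`| post_density mu rho LD y u
                           - post_density mu rho Lt y u |)%:E)
   <= (K * C0 * expR W)%:E * Lnorm mu p (fun u => (dist u)%:E)
      + (K * M * C0 ^+ 2 * expR W * fine (\int[mu]_x (dist x)%:E))%:E)%E.
Proof.
move=> p1 intfin; set E := fine _.
have E0 : 0 <= E by rewrite fine_ge0 // integral_ge0 // => x _; rewrite lee_fin.
have dZ : `|normalizer mu rho Lt y - normalizer mu rho LD y| <= K * E.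
  by rewrite -lee_fin EFinM fineK // distrC; exact: normalizer_dist_le.
set a := K * C0 * expR W; set b := K * M * C0 ^+ 2 * expR W.
have a0 : 0 <= a by rewrite !mulr_ge0 // ltW ?expR_gt0.
have b0 : 0 <= b by rewrite !mulr_ge0 ?sqr_ge0 // ltW ?expR_gt0.
have mdiff : measurable_fun setT
    (fun u => `|post_density mu rho LD y u - post_density mu rho Lt y u|).
  apply: (measurableT_comp (@normr_measurable R setT)).
  by apply: measurable_funB; exact: measurable_post_density.
have mbound : measurable_fun setT (fun u => a * dist u + b * E).
  apply: measurable_funD; last exact: measurable_cst.
  by apply: measurable_funM => //; exact: measurable_cst.
apply: (le_trans (Lnorm_le mu (le_trans lee01 p1) mdiff mbound _)).
  move=> u; have bound0 : 0 <= a * dist u + b * E by rewrite addr_ge0 ?mulr_ge0.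
  by rewrite normr_id (ger0_norm bound0); exact: post_density_diff_le.
exact: (Lnorm_affine_le mu p1 a0 (mulr_ge0 b0 E0) measurable_dist).
Qed.

Lemma Lnorm_post_density_diff_le (C : R) (p : \bar R) :
  0 < C -> K * C0 + K * M * C0 ^+ 2 <= C -> (1 <= p)%E ->
  (Lnorm mu p (fun u => (`| post_density mu rho LD y u
                           - post_density mu rho Lt y u |)%:E)
   <= C%:E * LpG G mu p (fun u => (LD u - Lt u)%R) * (expR W)%:E)%E.
Proof.
move=> C_gt0 C_ge p1.
set N := LpG G mu p _.
have eW : 0 < expR W := expR_gt0 _.
have [->|Nfin] := eqVneq N +oo%E.
  by rewrite gt0_muley ?lte_fin // gt0_mulye ?lte_fin // leey.
have int_le_N : (\int[mu]_x (dist x)%:E <= N)%E by exact: integral_le_Lnorm.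
have int0 : (0 <= \int[mu]_x (dist x)%:E)%E.
  by apply: integral_ge0 => x _; rewrite lee_fin.
have N0 : (0 <= N)%E := le_trans int0 int_le_N.
have Nfin' : N \is a fin_num by rewrite ge0_fin_numE ?ltey.
have intfin : (\int[mu]_x (dist x)%:E)%E \is a fin_num.
  by rewrite ge0_fin_numE // (le_lt_trans int_le_N) // ltey.
apply: le_trans (Lnorm_post_density_diff_le_dist p1 intfin) _.
change (Lnorm mu p (fun x => (dist x)%:E)) with N.
rewrite -(fineK Nfin') -!EFinM -EFinD lee_fin.
set E := fine (\int[mu]_x (dist x)%:E)%E; set b := K * M * C0 ^+ 2 * expR W.
have EN : E <= fine N by rewrite -lee_fin /E !fineK.
have : 0 <= (C - (K * C0 + K * M * C0 ^+ 2)) * expR W * fine N.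
  by rewrite !mulr_ge0 ?subr_ge0 ?fine_ge0 // ltW.
have : b * E <= b * fine N by rewrite ler_wpM2l // !mulr_ge0 ?sqr_ge0 // ltW.
rewrite /b; lra.
Qed.

End posterior.

Theorem mainTheorem10 (R : realType) (d : nat) (G : 'M[R]_d)
    (rho : 'rV[R]_d -> R) :
  spd_matrix G -> noise_assumptions G rho ->
  exists C : R, 0 < C /\
  forall (X : completeNormedModType R), separable_space X ->
  forall (mu : probability (borel X) R) (Ldag LDelta : borel X -> 'rV[R]_d),
  rv_measurable Ldag -> rv_measurable LDelta ->
  (LpG G mu 2%:E Ldag < +oo)%E -> (LpG G mu 2%:E LDelta < +oo)%E ->
  forall (y : 'rV[R]_d) (p : \bar R), (1 <= p)%E ->
  (Lnorm mu p (fun u => (`| post_density mu rho LDelta y u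
                           - post_density mu rho Ldag y u |)%R%:E)
   <= C%:E * LpG G mu p (fun u => (LDelta u - Ldag u)%R)
      * (expR (2 * Gnorm G y ^+ 2 + fine (LpG G mu 2%:E LDelta) ^+ 2
                 + fine (LpG G mu 2%:E Ldag) ^+ 2))%R%:E)%E.
Proof.
move=> spdG [rho_gt0 [L rho_lip] [M rho_le] [C0 [C0_gt0 rho_ge]]].
set K := Num.max L 0.
have K0 : 0 <= K by rewrite le_max lexx orbT.
have rho_lipK a b : `|rho a - rho b| <= K * Gnorm G (a - b).
  by apply: le_trans (rho_lip a b) _; rewrite ler_wpM2r ?Gnorm_ge0 ?le_max ?lexx.
have M0 : 0 <= M := le_trans (ltW (rho_gt0 0)) (rho_le 0).
have KC0 : 0 <= K * C0 + K * M * C0 ^+ 2.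
  by rewrite addr_ge0 ?mulr_ge0 ?sqr_ge0 // ltW.
exists (K * C0 + K * M * C0 ^+ 2 + 1); split; first lra.
move=> X _ mu Ldag LDelta mLdag mLDelta Ldag2 LDelta2 y p p1.
by apply: (Lnorm_post_density_diff_le spdG rho_gt0 K0 rho_lipK rho_le C0_gt0 rho_ge)
  => //; lra.
Qed.
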